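(* Let $X$ be a finite set with $|X|\ge 2$ and let $\rho:X\times X\to\mathbb{R}_{\geq 0}$ be a function such that $\rho(x,y)=0$ if and only if $x=y$. Let $$KR(\rho)=\mathrm{Conv}\Big\{ e_{x,y}:=\frac{e_x-e_y}{\rho(x,y)} \;\Big|\; x,y\in X,\ x\neq y\Big\}\subset V_0(X).$$ Then $\rho$ is a quasi-metric on $X$ if and only if none of the points $e_{x,y}$ ($x\neq y$) lies in the interior of $KR(\rho)$ (interior taken relative to $V_0(X)$).
   Context: $\{e_x\}_{x\in X}$ is the standard basis of $\mathbb{R}^X$, and $V_0(X)=\{\mu\in\mathbb{R}^X:\sum_{x}\mu(x)=0\}$. A quasi-metric (asymmetric distance function) is a function $\rho:X\times X\to\mathbb{R}_{\ge 0}$ such that $\rho(x,y)=0\iff x=y$ and $\rho(x,z)\le\rho(x,y)+\rho(y,z)$ for all $x,y,z\in X$; symmetry is not required. *)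

From HB Require Import structures.
From mathcomp Require Import all_boot all_order all_algebra.
Set Implicit Arguments. Unset Strict Implicit. Unset Printing Implicit Defensive.
Import Order.TTheory GRing.Theory Num.Theory.
Local Open Scope ring_scope.

Section Defs.
Variables (R : realFieldType) (X : finType).

Definition ebasis (x : X) : X -> R := fun z => if z == x then 1 else 0.

Definition inV0 (mu : X -> R) : Prop := \sum_(z : X) mu z = 0.

Definition exy (rho : X -> X -> R) (x y : X) : X -> R :=
  fun z => (ebasis x z - ebasis y z) / rho x y.

Definition inKR (rho : X -> X -> R) (p : X -> R) : Prop :=
  exists lam : X -> X -> R,
    (forall x y, 0 <= lam x y) /\
    \sum_(x : X) \sum_(y : X | y != x) lam x y = 1 /\
    (forall z, p z = \sum_(x : X) \sum_(y : X | y != x) lam x y * exy rho x y z).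

(* p lies in the interior of KR(rho) relative to V_0(X)
   (sup-norm ball intersected with V_0; all norms are equivalent) *)
Definition in_rel_interior_KR (rho : X -> X -> R) (p : X -> R) : Prop :=
  exists eps : R, 0 < eps /\
    forall v : X -> R, inV0 v -> (forall z, `|v z| < eps) ->
      inKR rho (fun z => p z + v z).

Definition quasi_metric (rho : X -> X -> R) : Prop :=
  (forall x y, 0 <= rho x y) /\
  (forall x y, rho x y = 0 <-> x = y) /\
  (forall x y z, rho x z <= rho x y + rho y z).

End Defs.

(* Write [s *: KR] for the sets of nonnegative combinations of
   the [e_{a,b}] with total weight [s].  If [rho] satisfies the triangle
   inequality, the function [f := rho(., y)] has [f a - f b <= rho(a,b)], so the
   linear form [p |-> sum_z f z * p z] is at most [1] on [KR(rho)], while it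
   equals [1] at [e_{x,y}] and exceeds [1] at [e_{x,y} + d (e_x - e_y)]: the
   point [e_{x,y}] lies on the boundary.  Conversely, if
   [rho(x,y) + rho(y,z) < rho(x,z)], then [e_{x,z}] is a combination of
   [e_{x,y}] and [e_{y,z}] of total weight [t < 1]; every [v] in [V_0] is a
   combination of the [e_{a,x}] and [e_{x,a}] of weight linear in its
   sup-norm, and since [0 \in KR] the sets [s *: KR] grow with [s], so
   [e_{x,z} + v \in KR] for all small [v]. *)
From HB Require Import structures.
From mathcomp Require Import all_boot all_order all_algebra.
From mathcomp Require Import ring lra.
Import Order.TTheory GRing.Theory Num.Theory.
Local Open Scope ring_scope.

Section Basis.
Context {R : realFieldType} {X : finType}.

Lemma sum_mul_ebasis (f : X -> R) a : \sum_z f z * ebasis R a z = f a.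
Proof.
rewrite (bigD1 a) //= /ebasis eqxx mulr1 big1 ?addr0 // => z /negbTE->.
by rewrite mulr0.
Qed.

Lemma sum_ebasis_mul (f : X -> R) z : \sum_a f a * ebasis R a z = f z.
Proof.
rewrite (bigD1 z) //= /ebasis eqxx mulr1 big1 ?addr0 // => a.
by rewrite eq_sym => /negbTE->; rewrite mulr0.
Qed.

Lemma sum_mul_ebasisB (f : X -> R) a b :
  \sum_z f z * (ebasis R a z - ebasis R b z) = f a - f b.
Proof.
under eq_bigr do rewrite mulrBr.
by rewrite sumrB !sum_mul_ebasis.
Qed.

Lemma sum_mul_exy (rho : X -> X -> R) (f : X -> R) a b :
  \sum_z f z * exy rho a b z = (f a - f b) / rho a b.
Proof.
under eq_bigr do rewrite /exy mulrA.
by rewrite -mulr_suml sum_mul_ebasisB.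
Qed.

Lemma ebasisB_inV0 (a b : X) : inV0 (fun z => ebasis R a z - ebasis R b z).
Proof.
rewrite /inV0 -[RHS](subrr (1 : R)) -(sum_mul_ebasisB (fun=> 1) a b).
by apply: eq_bigr => z _; rewrite mul1r.
Qed.

Lemma norm_ebasisB_le1 (a b z : X) : `|ebasis R a z - ebasis R b z| <= 1.
Proof.
rewrite /ebasis; do 2 case: (_ == _);
by rewrite ?subrr ?subr0 ?sub0r ?normrN ?normr1 ?normr0.
Qed.

End Basis.

Section ScaledKR.
Context {R : realFieldType} {X : finType} (rho : X -> X -> R).

(* [in_scaled_KR s p] says [p \in s *: KR(rho)]; [inKR rho] is
   [in_scaled_KR 1] by conversion. *)
Definition in_scaled_KR (s : R) (p : X -> R) : Prop :=
  exists lam : X -> X -> R,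
    (forall x y, 0 <= lam x y) /\
    \sum_(x : X) \sum_(y : X | y != x) lam x y = s /\
    (forall z, p z = \sum_(x : X) \sum_(y : X | y != x) lam x y * exy rho x y z).

Lemma in_scaled_KR_ext {s} {p q : X -> R} :
  in_scaled_KR s p -> p =1 q -> in_scaled_KR s q.
Proof.
by move=> [lam [? [? ep]]] epq; exists lam; split=> //; split=> // z; rewrite -epq.
Qed.

Lemma in_scaled_KR_add {s t} {p q : X -> R} :
  in_scaled_KR s p -> in_scaled_KR t q -> in_scaled_KR (s + t) (fun z => p z + q z).
Proof.
move=> [l1 [l1_ge0 [<- ep]]] [l2 [l2_ge0 [<- eq]]].
exists (fun x y => l1 x y + l2 x y); split=> [x y|]; first exact: addr_ge0.
split=> [|z]; first by rewrite -big_split; apply: eq_bigr => x _; rewrite -big_split.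
rewrite ep eq -big_split; apply: eq_bigr => x _; rewrite -big_split.
by apply: eq_bigr => y _; rewrite mulrDl.
Qed.

Lemma in_scaled_KR_scale {c s} {p : X -> R} :
  0 <= c -> in_scaled_KR s p -> in_scaled_KR (c * s) (fun z => c * p z).
Proof.
move=> c_ge0 [lam [lam_ge0 [<- ep]]].
exists (fun x y => c * lam x y); split=> [x y|]; first exact: mulr_ge0.
split=> [|z]; first by rewrite mulr_sumr; apply: eq_bigr => x _; rewrite mulr_sumr.
rewrite ep mulr_sumr; apply: eq_bigr => x _; rewrite mulr_sumr.
by apply: eq_bigr => y _; rewrite mulrA.
Qed.

Lemma exy_in_KR {a b : X} : a != b -> in_scaled_KR 1 (exy rho a b).
Proof.
move=> ab; pose delta x y : R := if (x == a) && (y == b) then 1 else 0.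
have sum_delta (G : X -> X -> R) :
    \sum_x \sum_(y | y != x) delta x y * G x y = G a b.
  rewrite (bigD1 a) //= [X in _ + X]big1 ?addr0 => [|x /negbTE xa]; last first.
    by apply: big1 => y _; rewrite /delta xa mul0r.
  rewrite (bigD1 b) 1?eq_sym //= /delta !eqxx mul1r big1 ?addr0 // => y.
  by case/andP=> _ /negbTE->; rewrite mul0r.
exists delta; split=> [x y|]; first by rewrite /delta; case: ifP.
split=> [|z]; last by rewrite sum_delta.
by rewrite -(sum_delta (fun _ _ => 1)); apply: eq_bigr => x _;
  apply: eq_bigr => y _; rewrite mulr1.
Qed.

Hypothesis rho_gt0 : forall a b, a != b -> 0 < rho a b.

Lemma lipschitz_form_le {s p} {f : X -> R} :
  (forall a b, a != b -> f a - f b <= rho a b) ->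
  in_scaled_KR s p -> \sum_z f z * p z <= s.
Proof.
move=> f_lip [lam [lam_ge0 [<- ep]]].
under eq_bigr do rewrite ep mulr_sumr; rewrite exchange_big ler_sum // => a _.
under eq_bigr do rewrite mulr_sumr; rewrite exchange_big ler_sum // => b ba.
under eq_bigr do rewrite mulrCA; rewrite -mulr_sumr sum_mul_exy.
have ab : a != b by rewrite eq_sym.
by rewrite ler_piMr // ler_pdivrMr ?rho_gt0 // mul1r f_lip.
Qed.

Lemma exy_not_in_rel_interior_KR
  (rho_refl : forall y, rho y y = 0)
  (rho_tri : forall x y z, rho x z <= rho x y + rho y z) (x y : X) :
  x != y -> ~ in_rel_interior_KR rho (exy rho x y).
Proof.
move=> xy [eps [eps_gt0 interior]].
pose d := eps / 2; have d_gt0 : 0 < d by rewrite divr_gt0.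
pose v z := d * (ebasis R x z - ebasis R y z).
have v0 : inV0 v by rewrite /inV0 -mulr_sumr (ebasisB_inV0 x y) mulr0.
have v_small z : `|v z| < eps.
  rewrite normrM ger0_norm ?ltW //.
  have := ler_piMr (ltW d_gt0) (norm_ebasisB_le1 x y z); rewrite /d; lra.
pose f z := rho z y.
have f_lip a b : a != b -> f a - f b <= rho a b.
  by move=> _; rewrite /f lerBlDr; apply: rho_tri.
have := lipschitz_form_le f_lip (interior v v0 v_small).
have -> : \sum_z f z * (exy rho x y z + v z)
          = (rho x y)^-1 * (f x - f y) + d * (f x - f y).
  rewrite -!sum_mul_ebasisB !mulr_sumr -big_split /=.
  by apply: eq_bigr => z _; rewrite /v /exy; ring.
rewrite /f rho_refl subr0 mulVf ?gt_eqF ?rho_gt0 //.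
have : 0 < d * rho x y by rewrite mulr_gt0 ?rho_gt0.
lra.
Qed.

Hypothesis card_X_gt1 : (1 < #|X|)%N.

Lemma zero_in_scaled_KR {s} : 0 <= s -> in_scaled_KR s (fun _ => 0).
Proof.
move=> s_ge0; have /card_gt1P [a [b [_ _ ab]]] := card_X_gt1.
have ba : b != a by rewrite eq_sym.
have [ab_gt0 ba_gt0] := (rho_gt0 _ _ ab, rho_gt0 _ _ ba).
pose k := s / (rho a b + rho b a).
have k_ge0 : 0 <= k by rewrite divr_ge0 // addr_ge0 // ltW.
have := in_scaled_KR_add
  (in_scaled_KR_scale (mulr_ge0 (ltW ab_gt0) k_ge0) (exy_in_KR ab))
  (in_scaled_KR_scale (mulr_ge0 (ltW ba_gt0) k_ge0) (exy_in_KR ba)).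
have -> : rho a b * k * 1 + rho b a * k * 1 = s.
  by rewrite /k; field; rewrite gt_eqF // addr_gt0.
move/in_scaled_KR_ext; apply=> z; rewrite /exy; field.
by rewrite !gt_eqF.
Qed.

Lemma in_scaled_KR_le {s t} {p : X -> R} :
  s <= t -> in_scaled_KR s p -> in_scaled_KR t p.
Proof.
rewrite -subr_ge0 => /zero_in_scaled_KR pt ps.
have := in_scaled_KR_add ps pt; rewrite addrC subrK.
by move/in_scaled_KR_ext; apply=> z; rewrite addr0.
Qed.

Lemma in_scaled_KR_sum {I : Type} (r : seq I) {s : I -> R} {f : I -> X -> R} :
  (forall i, in_scaled_KR (s i) (f i)) ->
  in_scaled_KR (\sum_(i <- r) s i) (fun z => \sum_(i <- r) f i z).
Proof.
move=> fs; elim: r => [|i r IH].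
  rewrite big_nil; apply: (in_scaled_KR_ext (zero_in_scaled_KR (lexx (0 : R)))).
  by move=> z; rewrite big_nil.
rewrite big_cons; apply: (in_scaled_KR_ext (in_scaled_KR_add (fs i) IH)).
by move=> z; rewrite big_cons.
Qed.

Hypothesis rho_ge0 : forall a b, 0 <= rho a b.

Lemma ebasisB_in_scaled_KR (c : R) a x :
  in_scaled_KR (`|c| * (rho a x + rho x a)) (fun z => c * (ebasis R a z - ebasis R x z)).
Proof.
have [<-|xa] := eqVneq x a.
  have weight_ge0 := mulr_ge0 (normr_ge0 c) (addr_ge0 (rho_ge0 x x) (rho_ge0 x x)).
  by apply: (in_scaled_KR_ext (zero_in_scaled_KR weight_ge0)) => z; rewrite subrr mulr0.
have ax : a != x by rewrite eq_sym.
have [c_ge0|c_lt0] := lerP 0 c.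
- apply: in_scaled_KR_le _ (in_scaled_KR_ext
    (in_scaled_KR_scale (mulr_ge0 c_ge0 (rho_ge0 a x)) (exy_in_KR ax)) _).
    by rewrite ger0_norm // mulr1 ler_wpM2l // lerDl.
  by move=> z; rewrite /exy; field; rewrite gt_eqF ?rho_gt0.
- have oc_ge0 : 0 <= - c by rewrite oppr_ge0 ltW.
  apply: in_scaled_KR_le _ (in_scaled_KR_ext
    (in_scaled_KR_scale (mulr_ge0 oc_ge0 (rho_ge0 x a)) (exy_in_KR xa)) _).
    by rewrite ltr0_norm // mulr1 ler_wpM2l // lerDr.
  by move=> z; rewrite /exy; field; rewrite gt_eqF ?rho_gt0.
Qed.

(* Any [v] in [V_0] equals [sum_a v a (e_a - e_x)]. *)
Lemma V0_in_scaled_KR {v : X -> R} (x : X) :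
  inV0 v -> in_scaled_KR (\sum_a `|v a| * (rho a x + rho x a)) v.
Proof.
move=> v0.
have := in_scaled_KR_sum (index_enum X) (fun a => ebasisB_in_scaled_KR (v a) a x).
move/in_scaled_KR_ext; apply=> z.
under eq_bigr do rewrite mulrBr.
by rewrite sumrB sum_ebasis_mul -mulr_suml v0 mul0r subr0.
Qed.

Lemma exy_in_scaled_KR_path {x y z : X} : x != y -> y != z -> x != z ->
  in_scaled_KR ((rho x y + rho y z) / rho x z) (exy rho x z).
Proof.
move=> xy yz xz.
have := in_scaled_KR_add
  (in_scaled_KR_scale (divr_ge0 (rho_ge0 x y) (rho_ge0 x z)) (exy_in_KR xy))
  (in_scaled_KR_scale (divr_ge0 (rho_ge0 y z) (rho_ge0 x z)) (exy_in_KR yz)).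
rewrite !mulr1 -mulrDl; move/in_scaled_KR_ext; apply=> w; rewrite /exy; field.
by rewrite !gt_eqF ?rho_gt0.
Qed.

Lemma exy_in_rel_interior_KR_of_shortcut {x y z : X} : x != y -> y != z -> x != z ->
  rho x y + rho y z < rho x z -> in_rel_interior_KR rho (exy rho x z).
Proof.
move=> xy yz xz shortcut.
pose t := (rho x y + rho y z) / rho x z.
have t_lt1 : t < 1 by rewrite ltr_pdivrMr ?rho_gt0 ?mul1r.
pose K := \sum_a (rho a x + rho x a).
have K_ge0 : 0 <= K by apply: sumr_ge0 => a _; apply: addr_ge0.
pose eps := (1 - t) / (K + 1).
have eps_gt0 : 0 < eps by rewrite divr_gt0 ?subr_gt0 // ltr_wpDl.
exists eps; split=> // v v0 v_small.
have weight_le : \sum_a `|v a| * (rho a x + rho x a) <= 1 - t.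
  have -> : 1 - t = eps * (K + 1) by rewrite divfK // gt_eqF // ltr_wpDl.
  apply: le_trans (_ : eps * K <= _); last by rewrite ler_wpM2l ?lerDl ?ltW.
  rewrite mulr_sumr ler_sum // => a _.
  by apply: ler_wpM2r; [exact: addr_ge0 | exact: ltW].
rewrite lerBrDl in weight_le.
exact: (in_scaled_KR_le weight_le
  (in_scaled_KR_add (exy_in_scaled_KR_path xy yz xz) (V0_in_scaled_KR x v0))).
Qed.

End ScaledKR.

Theorem mainTheorem1 (R : realFieldType) (X : finType) (rho : X -> X -> R)
  (hX : (1 < #|X|)%N)
  (hnonneg : forall x y, 0 <= rho x y)
  (hzero : forall x y, rho x y = 0 <-> x = y) :
  quasi_metric rho <->
  (forall x y : X, x <> y -> ~ in_rel_interior_KR rho (exy rho x y)).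
Proof.
have rho_refl y : rho y y = 0 by apply/hzero.
have rho_gt0 a b : a != b -> 0 < rho a b.
  by move=> /eqP ab; rewrite lt_def hnonneg andbT; apply/eqP => /hzero.
split=> [[_ [_ rho_tri]] x y /eqP|boundary].
  exact: exy_not_in_rel_interior_KR.
do 2!split=> //; move=> x y z; rewrite leNgt; apply/negP => shortcut.
have xy : x != y by apply: contraTneq shortcut => ->; rewrite rho_refl add0r ltxx.
have yz : y != z by apply: contraTneq shortcut => ->; rewrite rho_refl addr0 ltxx.
have xz : x != z.
  apply: contraTneq shortcut => ->; rewrite rho_refl -leNgt.
  exact: addr_ge0.
apply: boundary (elimN eqP xz) _.
exact: (exy_in_rel_interior_KR_of_shortcut rho rho_gt0 hX hnonneg xy yz xz shortcut).
Qed.
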